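(* Let $d\ge2$ be an integer, $p\in(0,1]$, $\lambda\in(0,1)$, $b=1-(1-p)\lambda$, $\bar F$ the solution of $\bar F'(w)=\lambda(p\bar F(w)^d+(1-p)\bar F(w))-\bar F(w)$, $\bar F(0)=\lambda$, and $Q_\lambda=\int_0^\infty\bar F(w)\,dw$. Define $$\tilde Q_\lambda=\frac{\lambda}{b}\left(1+\frac1{d-1}\log\left(\frac{b}{b-p\lambda^d}\right)\right).$$ Then $$\tilde Q_\lambda-\frac{\lambda^{d+1}}{p(d-1)^2b^2}\cdot\frac{\pi^2}{6}\le Q_\lambda\le\tilde Q_\lambda.$$ *)

From Stdlib Require Import Reals.
From Coquelicot Require Import Coquelicot.
Open Scope R_scope.

Definition Qtilde (d : nat) (p lam : R) : R :=
  let b := 1 - (1 - p) * lam in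
  lam / b * (1 + / (INR d - 1) * ln (b / (b - p * lam ^ d))).

From Stdlib Require Import Reals Lra Lia.
From Coquelicot Require Import Coquelicot.
Open Scope R_scope.

(* Write n = d - 1, b = 1 - (1 - p) lam, c = p lam / b and r = c lam^n < 1.
   The equation reads F' = F (b c F^n - b), so F is positive and explicitly
   F^-n = c + (lam^-n - c) exp (n b w); hence 0 < F <= lam and F -> 0.
   The substitution u = F(w) turns Q into K(lam), where
       K(u) = int_0^u du / (b (1 - c u^n)).
   Both bounds are then comparisons of derivatives on [0, lam]:
   - Q~ = G(lam) with G(u) = u/b (1 - ln(1 - c u^n)/n), and
     G' - K' = -ln(1 - c u^n)/(b n) >= 0, so Q <= Q~;
   - bounding -ln(1-x) by its Taylor polynomial plus remainder and
     integrating term by term gives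
       G(lam) - K(lam) <= lam/(b n) sum_k r^k/(k (k n + 1)) + o(1)
                       <= lam r/(b n^2) sum_k 1/k^2,
     and sum_k 1/k^2 <= pi^2/6 is proved by Cauchy's cosecant argument. *)

Lemma le_of_derive_nonneg (f df : R -> R) (a b : R) :
  a <= b -> (forall x, a <= x <= b -> is_derive f x (df x)) ->
  (forall x, a <= x <= b -> 0 <= df x) -> f a <= f b.
Proof.
  intros Hab Hd Hpos.
  destruct (Rle_lt_or_eq_dec a b Hab) as [Hlt|<-]; [|lra].
  destruct (MVT_cor2 f df a b Hlt) as [c [Hfab Hc]].
  { intros c Hc. apply is_derive_Reals, Hd; lra. }
  assert (0 <= df c) by (apply Hpos; lra). nra.
Qed.

Lemma eq_of_derive_zero (f : R -> R) (a b : R) :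
  a <= b -> (forall x, a <= x <= b -> is_derive f x 0) -> f a = f b.
Proof.
  intros Hab Hd.
  destruct (Rle_lt_or_eq_dec a b Hab) as [Hlt|<-]; [|reflexivity].
  destruct (MVT_cor2 f (fun _ => 0) a b Hlt) as [c [Hfab _]].
  { intros c Hc. apply is_derive_Reals, Hd; lra. }
  lra.
Qed.

Lemma sum_f_R0_rev (a : nat -> R) (N : nat) :
  sum_f_R0 a N = sum_f_R0 (fun i => a (N - i)%nat) N.
Proof.
  induction N as [|N IH]; [reflexivity|].
  rewrite tech5, IH, (decomp_sum _ (S N)) by lia.
  rewrite Nat.sub_0_r, Rplus_comm. reflexivity.
Qed.

Lemma sum_f_R0_pairs (a : nat -> R) (M : nat) :
  sum_f_R0 a (2 * M + 1) = sum_f_R0 (fun k => a (2 * k)%nat + a (2 * k + 1)%nat) M.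
Proof.
  induction M as [|M IH]; [reflexivity|].
  replace (2 * S M + 1)%nat with (S (S (2 * M + 1))) by lia.
  rewrite !tech5, IH.
  replace (S (2 * M + 1)) with (2 * S M)%nat by lia.
  replace (S (2 * S M)) with (2 * S M + 1)%nat by lia. ring.
Qed.

Lemma sum_f_R0_mono (a : nat -> R) (N N' : nat) :
  (forall k, 0 <= a k) -> (N <= N')%nat -> sum_f_R0 a N <= sum_f_R0 a N'.
Proof.
  intros Ha HN. induction HN as [|N' _ IH]; [lra|].
  rewrite tech5. specialize (Ha (S N')). lra.
Qed.

Lemma is_derive_sum_f_R0 (f : nat -> R -> R) (df : nat -> R) (N : nat) (x : R) :
  (forall k, (k <= N)%nat -> is_derive (f k) x (df k)) ->
  is_derive (fun y => sum_f_R0 (fun k => f k y) N) x (sum_f_R0 df N).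
Proof.
  intros H. rewrite <- sum_n_Reals.
  apply (is_derive_ext (fun y => sum_n (fun k => f k y) N)).
  { intros t. apply sum_n_Reals. }
  apply (@is_derive_sum_n R_AbsRing R_NormedModule); auto.
Qed.

Lemma is_derive_pow_succ_div (m : nat) (x : R) :
  is_derive (fun y => y ^ S m / INR (S m)) x (x ^ m).
Proof.
  assert (INR (S m) <> 0) by (apply not_0_INR; lia).
  auto_derive; [exact I|]. simpl pred. field. auto.
Qed.

(* A solution of the linear equation y' = s y with continuous s and y(0) > 0
   stays positive: y exp(-int_0 s) is constant. *)
Lemma pos_of_linear_ode (y s : R -> R) :
  (forall w, continuous s w) -> 0 < y 0 ->
  (forall w, 0 <= w -> is_derive y w (s w * y w)) ->
  forall w, 0 <= w -> 0 < y w.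
Proof.
  intros Hs Hy0 Hy w Hw.
  set (S := fun v => RInt s 0 v).
  assert (HS : forall v, is_derive S v (s v)).
  { intros v. apply is_derive_RInt with 0; [|apply Hs].
    apply filter_forall. intros x.
    apply (RInt_correct (V := R_CompleteNormedModule)), ex_RInt_continuous.
    intros; apply Hs. }
  assert (Hconst : y 0 * exp (- S 0) = y w * exp (- S w)).
  { apply (eq_of_derive_zero (fun v => y v * exp (- S v))); [exact Hw|].
    intros v Hv. auto_derive.
    - split; [eexists; apply Hy; lra|]. split; [eexists; apply HS | exact I].
    - replace (Derive (fun t => y t) v) with (s v * y v)
        by (symmetry; apply is_derive_unique, Hy; lra).
      replace (Derive (fun t => S t) v) with (s v)
        by (symmetry; apply is_derive_unique, HS).
      ring. }
  pose proof (exp_pos (- S 0)). pose proof (exp_pos (- S w)).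
  assert (0 < y w * exp (- S w)) by (rewrite <- Hconst; apply Rmult_lt_0_compat; auto).
  nra.
Qed.

Lemma pow_le_cancel (x y : R) (m : nat) :
  (0 < m)%nat -> 0 <= x -> 0 <= y -> x ^ m <= y ^ m -> x <= y.
Proof.
  intros Hm Hx Hy Hpow. destruct (Rle_lt_dec x y) as [|Hlt]; [assumption|exfalso].
  destruct m as [|m]; [lia|]. simpl in Hpow.
  assert (y ^ m <= x ^ m) by (apply pow_incr; lra).
  assert (0 < x ^ m) by (apply pow_lt; lra).
  nra.
Qed.

Definition odd_angle (M k : nat) : R := INR (2 * k + 1) * PI / (4 * INR (S M)).

(* Sum of csc^2 over these angles; Cauchy's argument evaluates it exactly
   when M + 1 is a power of 2. *)
Definition csc_sum (M : nat) : R :=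
  sum_f_R0 (fun k => / sin (odd_angle M k) ^ 2) M.

Lemma odd_angle_bounds (M k : nat) : (k <= M)%nat -> 0 < odd_angle M k < PI / 2.
Proof.
  intros Hk. unfold odd_angle.
  assert (H1 : 0 < INR (2 * k + 1)) by (apply lt_0_INR; lia).
  assert (H2 : INR (2 * k + 1) < 2 * INR (S M)).
  { replace 2 with (INR 2) by reflexivity. rewrite <- mult_INR. apply lt_INR. lia. }
  pose proof PI_RGT_0.
  split.
  - apply Rdiv_lt_0_compat; nra.
  - apply Rmult_lt_reg_r with (4 * INR (S M)); [lra|].
    field_simplify; nra.
Qed.

Lemma csc_double (y : R) : 0 < y < PI / 2 ->
  / sin y ^ 2 + / sin (PI / 2 - y) ^ 2 = 4 * / sin (2 * y) ^ 2.
Proof.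
  intros Hy. rewrite sin_shift, sin_2a.
  assert (sin y <> 0) by (apply Rgt_not_eq, sin_gt_0; lra).
  assert (cos y <> 0) by (apply Rgt_not_eq, cos_gt_0; lra).
  pose proof (sin2_cos2 y) as Hpyth. unfold Rsqr in Hpyth.
  field_simplify; auto.
  replace (sin y ^ 2 + cos y ^ 2) with 1 by lra. field; auto.
Qed.

(* Pairing the angle of index k with its complement pi/2 - angle shows
   that doubling the number of angles multiplies the sum by 4. *)
Lemma csc_sum_double (M : nat) : csc_sum (2 * M + 1) = 4 * csc_sum M.
Proof.
  unfold csc_sum.
  rewrite (tech2 _ M (2 * M + 1)) by lia.
  replace (2 * M + 1 - S M)%nat with M by lia.
  rewrite (sum_f_R0_rev (fun i => / sin (odd_angle (2 * M + 1) (S M + i)) ^ 2)).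
  rewrite <- plus_sum, scal_sum.
  apply sum_eq. intros i Hi.
  assert (Hsum : odd_angle (2 * M + 1) (S M + (M - i)) = PI / 2 - odd_angle (2 * M + 1) i).
  { unfold odd_angle.
    replace (2 * (S M + (M - i)) + 1)%nat with (4 * S M - (2 * i + 1))%nat by lia.
    rewrite minus_INR by lia.
    rewrite !plus_INR, !mult_INR, !S_INR, !plus_INR, !mult_INR. simpl INR.
    field. pose proof (pos_INR M). lra. }
  assert (Hdbl : 2 * odd_angle (2 * M + 1) i = odd_angle M i).
  { unfold odd_angle. rewrite !S_INR, !plus_INR, !mult_INR. simpl INR.
    field. pose proof (pos_INR M). lra. }
  rewrite Hsum, csc_double, Hdbl; [ring|].
  pose proof (odd_angle_bounds M i Hi). lra.
Qed.

Lemma csc_sum_pow2 (n : nat) : csc_sum (2 ^ n - 1) = 2 * (2 ^ n) ^ 2.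
Proof.
  induction n as [|n IH].
  - unfold csc_sum, odd_angle. simpl.
    replace (1 * PI / (4 * 1)) with (PI / 4) by field.
    rewrite sin_PI4. assert (Hs : sqrt 2 * sqrt 2 = 2) by (apply sqrt_sqrt; lra).
    assert (sqrt 2 <> 0) by (apply Rgt_not_eq, sqrt_lt_R0; lra).
    replace (1 / sqrt 2 * (1 / sqrt 2 * 1)) with (/ (sqrt 2 * sqrt 2)) by (field; auto).
    rewrite Hs. field.
  - replace (2 ^ S n - 1)%nat with (2 * (2 ^ n - 1) + 1)%nat
      by (pose proof (Nat.pow_nonzero 2 n); simpl; lia).
    rewrite csc_sum_double, IH. simpl. ring.
Qed.

(* Since sin x < x, the odd reciprocal squares are bounded by pi^2/8. *)
Lemma odd_squares_le (n : nat) :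
  sum_f_R0 (fun k => / INR (2 * k + 1) ^ 2) (2 ^ n - 1) <= PI ^ 2 / 8.
Proof.
  set (M := (2 ^ n - 1)%nat).
  assert (HM : INR (S M) = 2 ^ n).
  { replace (S M) with (2 ^ n)%nat by (unfold M; pose proof (Nat.pow_nonzero 2 n); lia).
    rewrite pow_INR. reflexivity. }
  assert (Hpow : 0 < 2 ^ n) by (apply pow_lt; lra).
  pose proof PI_RGT_0 as HPI.
  set (s := (4 * 2 ^ n / PI) ^ 2).
  assert (Hs : 0 < s) by (apply pow_lt, Rdiv_lt_0_compat; lra).
  assert (Hcmp : sum_f_R0 (fun k => / INR (2 * k + 1) ^ 2 * s) M <= csc_sum M).
  { apply sum_Rle. intros k Hk.
    pose proof (odd_angle_bounds M k Hk) as Hangle.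
    pose proof (sin_lt_x _ (proj1 Hangle)).
    assert (0 < sin (odd_angle M k)) by (apply sin_gt_0; lra).
    replace (/ INR (2 * k + 1) ^ 2 * s) with (/ odd_angle M k ^ 2).
    2:{ unfold s, odd_angle. rewrite HM. field.
        repeat split; try lra. apply not_0_INR. lia. }
    apply Rinv_le_contravar; [apply pow_lt; lra|].
    apply pow_incr; lra. }
  rewrite <- scal_sum in Hcmp. unfold M in Hcmp. rewrite csc_sum_pow2 in Hcmp.
  apply Rmult_le_reg_l with s; [exact Hs|].
  eapply Rle_trans; [exact Hcmp|]. right. unfold s. field. lra.
Qed.

(* The Basel bound: every partial sum of sum 1/k^2 is at most pi^2/6,
   because the even terms contribute a quarter of the whole. *)
Lemma basel_le (N : nat) : sum_f_R0 (fun k => / INR (S k) ^ 2) N <= PI ^ 2 / 6.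
Proof.
  set (E := fun N => sum_f_R0 (fun k => / INR (S k) ^ 2) N).
  assert (Hpos : forall k, 0 <= / INR (S k) ^ 2)
    by (intros k; apply Rlt_le, Rinv_0_lt_compat, pow_lt, lt_0_INR; lia).
  assert (Hsplit : forall M, E (2 * M + 1)%nat =
    sum_f_R0 (fun k => / INR (2 * k + 1) ^ 2) M + E M / 4).
  { intros M. unfold E. rewrite sum_f_R0_pairs, plus_sum. f_equal.
    - apply sum_eq. intros k _. do 3 f_equal. lia.
    - unfold Rdiv. rewrite Rmult_comm, scal_sum. apply sum_eq. intros k _.
      replace (S (2 * k + 1)) with (2 * S k)%nat by lia. rewrite mult_INR.
      replace (INR 2) with 2 by reflexivity. field. apply not_0_INR. lia. }
  set (M := (2 ^ N - 1)%nat).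
  assert (HNM : (N <= 2 * M + 1)%nat).
  { unfold M. pose proof (Nat.pow_gt_lin_r 2 N). lia. }
  assert (HEM : E M <= E (2 * M + 1)%nat) by (apply sum_f_R0_mono; auto; lia).
  pose proof (Hsplit M). pose proof (odd_squares_le N) as Hodd. fold M in Hodd.
  pose proof (sum_f_R0_mono _ _ _ Hpos HNM). unfold E in *. lra.
Qed.

Definition log_series (N : nat) (y : R) : R :=
  sum_f_R0 (fun k => y ^ S k / INR (S k)) N.

Lemma log_series_derive (N : nat) (y : R) :
  is_derive (log_series N) y (sum_f_R0 (fun k => y ^ k) N).
Proof.
  apply (is_derive_sum_f_R0 (fun k y => y ^ S k / INR (S k))).
  intros k _. apply is_derive_pow_succ_div.
Qed.

Lemma neg_ln_taylor (N : nat) (x : R) : 0 <= x < 1 ->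
  - ln (1 - x) <= log_series N x + x ^ S (S N) / (INR (S (S N)) * (1 - x)).
Proof.
  intros Hx.
  assert (HN : 0 < INR (S (S N))) by (apply lt_0_INR; lia).
  set (h := fun y => log_series N y + y ^ S (S N) / (INR (S (S N)) * (1 - x)) + ln (1 - y)).
  assert (Hh0 : h 0 = 0).
  { unfold h, log_series. rewrite Rminus_0_r, ln_1, pow_i by lia.
    rewrite (sum_eq _ (fun _ => 0)); [rewrite sum_cte; field; lra|].
    intros k _. rewrite pow_i by lia. unfold Rdiv. ring. }
  enough (0 <= h x) by (unfold h in *; lra).
  rewrite <- Hh0.
  apply (le_of_derive_nonneg h
    (fun y => sum_f_R0 (fun k => y ^ k) N + y ^ S N / (1 - x) - / (1 - y))); [lra| |].
  - intros y Hy. unfold h. auto_derive.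
    + split; [eexists; apply log_series_derive|]. repeat split; lra.
    + replace (Derive _ y) with (sum_f_R0 (fun k => y ^ k) N)
        by (symmetry; apply is_derive_unique, log_series_derive).
      change (match N with 0%nat => 1 | S _ => INR N + 1 end) with (INR (S N)).
      rewrite <- S_INR. simpl pow. field. split; lra.
  - intros y Hy.
    rewrite tech3 by lra.
    replace ((1 - y ^ S N) / (1 - y) + y ^ S N / (1 - x) - / (1 - y))
      with (y ^ S N * (/ (1 - x) - / (1 - y))) by (field; lra).
    apply Rmult_le_pos; [apply pow_le; lra|].
    apply Rge_le, Rge_minus, Rle_ge, Rinv_le_contravar; lra.
Qed.

(* Projection of u onto [0, a]; it extends functions given on [0, a]
   to continuous functions on the whole line. *)
Definition clamp (a u : R) : R := (Rabs u - Rabs (u - a) + a) / 2.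

Lemma clamp_id (a u : R) : 0 <= u <= a -> clamp a u = u.
Proof.
  intros Hu. unfold clamp. rewrite Rabs_right, Rabs_left1 by lra. field.
Qed.

Lemma clamp_range (a u : R) : 0 <= a -> 0 <= clamp a u <= a.
Proof.
  intros Ha. unfold clamp.
  destruct (Rle_dec 0 u); destruct (Rle_dec u a);
    repeat first [rewrite (Rabs_right u) by lra | rewrite (Rabs_left u) by lra
                 | rewrite (Rabs_right (u - a)) by lra | rewrite (Rabs_left1 (u - a)) by lra];
    lra.
Qed.

Lemma continuous_clamp (a u : R) : continuous (clamp a) u.
Proof.
  apply continuity_pt_filterlim. unfold clamp.
  assert (Hcst : forall k, continuity_pt (fun _ => k) u)
    by (intros k; apply continuity_pt_const; intros ? ?; reflexivity).
  apply continuity_pt_mult; [|apply Hcst].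
  apply continuity_pt_plus; [apply continuity_pt_minus|apply Hcst].
  - apply Rcontinuity_abs.
  - apply (continuity_pt_comp (fun v => v - a) Rabs).
    + apply continuity_pt_minus; [apply continuity_pt_id | apply Hcst].
    + apply Rcontinuity_abs.
Qed.

Module Prop48.

(* Throughout, n = d - 1 >= 1 is the degree of the nonlinearity. *)
Section Quadrature.

Variables (n : nat) (p lam : R).
Hypotheses (Hn : (0 < n)%nat) (Hp : 0 < p <= 1) (Hlam : 0 < lam < 1).

(* b is the paper's b; with c = p lam / b the equation reads
   F' = F (b c F^n - b), and r = c lam^n is the largest value of c u^n
   on [0, lam]. *)
Definition b : R := 1 - (1 - p) * lam.
Definition c : R := p * lam / b.
Definition r : R := c * lam ^ n.

Lemma b_pos : 0 < b.
Proof. unfold b. nra. Qed.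

Lemma c_nonneg : 0 <= c.
Proof.
  pose proof b_pos. unfold c.
  apply Rmult_le_pos; [nra | apply Rlt_le, Rinv_0_lt_compat; lra].
Qed.

Lemma r_bounds : 0 < r < 1.
Proof.
  pose proof b_pos as Hb.
  assert (Hpow : 0 < lam ^ n <= 1).
  { split; [apply pow_lt; lra|]. rewrite <- (pow1 n). apply pow_incr; lra. }
  unfold r, c. split.
  - apply Rmult_lt_0_compat; [apply Rdiv_lt_0_compat|]; nra.
  - apply Rmult_lt_reg_r with b; [exact Hb|]. unfold b in *. field_simplify; nra.
Qed.

Lemma cu_bounds (u : R) : 0 <= u <= lam -> 0 <= c * u ^ n <= r.
Proof.
  intros Hu. pose proof c_nonneg.
  assert (0 <= u ^ n <= lam ^ n) by (split; [apply pow_le | apply pow_incr]; lra).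
  unfold r. split; [apply Rmult_le_pos|apply Rmult_le_compat_l]; lra.
Qed.

(* The integrand g after the substitution u = F(w), extended continuously
   outside [0, lam], and its primitive K vanishing at 0. *)
Definition g (u : R) : R := / (b * (1 - c * clamp lam u ^ n)).

Definition K (u : R) : R := RInt g 0 u.

Lemma g_on_interval (u : R) : 0 <= u <= lam -> g u = / (b * (1 - c * u ^ n)).
Proof. intros Hu. unfold g. rewrite clamp_id by exact Hu. reflexivity. Qed.

Lemma continuous_g (u : R) : continuous g u.
Proof.
  pose proof b_pos. pose proof r_bounds.
  pose proof (cu_bounds _ (clamp_range lam u ltac:(lra))).
  assert (Hsmooth : ex_derive (fun y => / (b * (1 - c * y ^ n))) (clamp lam u))
    by (auto_derive; nra).
  exact (continuous_comp (clamp lam) (fun y => / (b * (1 - c * y ^ n))) u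
           (continuous_clamp lam u) (ex_derive_continuous _ _ Hsmooth)).
Qed.

Lemma K_derive (u : R) : is_derive K u (g u).
Proof.
  apply is_derive_RInt with 0.
  - apply filter_forall. intros v.
    apply (RInt_correct (V := R_CompleteNormedModule)), ex_RInt_continuous.
    intros; apply continuous_g.
  - apply continuous_g.
Qed.

Lemma K_0 : K 0 = 0.
Proof. exact (RInt_point 0 g). Qed.

(* G(lam) is Q~ (see Qtilde_eq_G below). *)
Definition G (u : R) : R := u / b * (1 + / INR n * - ln (1 - c * u ^ n)).

Lemma G_derive (u : R) : 0 <= u <= lam ->
  is_derive G u (g u + - ln (1 - c * u ^ n) / (b * INR n)).
Proof.
  intros Hu. pose proof b_pos. pose proof r_bounds.
  pose proof (cu_bounds u Hu).
  assert (HnR : 0 < INR n) by (apply lt_0_INR; exact Hn).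
  rewrite g_on_interval by exact Hu. unfold G.
  assert (Hpred : u ^ n = u * u ^ pred n) by (destruct n; [lia | reflexivity]).
  auto_derive; [lra|].
  replace (1 + - (c * u ^ n)) with (1 - c * u ^ n) by ring.
  rewrite Hpred in *. field. repeat split; lra.
Qed.

Lemma G_0 : G 0 = 0.
Proof. unfold G, Rdiv. ring. Qed.

Lemma K_le_G : K lam <= G lam.
Proof.
  pose proof b_pos. pose proof r_bounds.
  assert (HnR : 0 < INR n) by (apply lt_0_INR; exact Hn).
  enough (G 0 - K 0 <= G lam - K lam) by (rewrite G_0, K_0 in *; lra).
  apply (le_of_derive_nonneg (fun u => G u - K u)
           (fun u => - ln (1 - c * u ^ n) / (b * INR n))); [lra| |].
  - intros u Hu.
    replace (- ln (1 - c * u ^ n) / (b * INR n))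
      with (g u + - ln (1 - c * u ^ n) / (b * INR n) - g u) by ring.
    apply (is_derive_minus G K); [apply G_derive | apply K_derive]; exact Hu.
  - intros u Hu. pose proof (cu_bounds u Hu).
    assert (ln (1 - c * u ^ n) <= 0) by (rewrite <- ln_1; apply ln_le; lra).
    apply Rdiv_le_0_compat; nra.
Qed.

Definition gap_series (N : nat) (u : R) : R :=
  sum_f_R0 (fun k => c ^ S k / INR (S k) * (u ^ S (S k * n) / INR (S (S k * n)))) N.

Lemma gap_series_derive (N : nat) (u : R) :
  is_derive (gap_series N) u (log_series N (c * u ^ n)).
Proof.
  apply (is_derive_sum_f_R0
           (fun k u => c ^ S k / INR (S k) * (u ^ S (S k * n) / INR (S (S k * n))))).
  intros k _.
  replace ((c * u ^ n) ^ S k / INR (S k))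
    with (c ^ S k / INR (S k) * u ^ (S k * n)).
  - apply is_derive_scal, is_derive_pow_succ_div.
  - rewrite Rpow_mult_distr, <- pow_mult, Nat.mul_comm. unfold Rdiv. ring.
Qed.

Lemma gap_series_0 (N : nat) : gap_series N 0 = 0.
Proof.
  unfold gap_series. rewrite (sum_eq _ (fun _ => 0)); [rewrite sum_cte; ring|].
  intros k _. rewrite pow_i by lia. unfold Rdiv. ring.
Qed.

(* Integrating the Taylor bound of -ln(1 - c u^n) over [0, lam] bounds the
   gap G(lam) - K(lam) by the truncated series plus a remainder that is
   uniform in u (as c u^n <= r). *)
Lemma G_sub_K_le (N : nat) :
  G lam - K lam <= (gap_series N lam + lam * (r ^ S (S N) / (1 - r))) / (b * INR n).
Proof.
  pose proof b_pos. pose proof r_bounds.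
  assert (HnR : 0 < INR n) by (apply lt_0_INR; exact Hn).
  set (tail := r ^ S (S N) / (1 - r)).
  set (phi := fun u => (gap_series N u + u * tail) / (b * INR n) - (G u - K u)).
  enough (phi 0 <= phi lam)
    by (unfold phi in *; rewrite gap_series_0, G_0, K_0 in *; lra).
  apply (le_of_derive_nonneg phi
           (fun u => (log_series N (c * u ^ n) + tail + ln (1 - c * u ^ n)) / (b * INR n)));
    [lra| |].
  - intros u Hu. unfold phi. auto_derive.
    + repeat split; try lra.
      * eexists; apply gap_series_derive.
      * eexists; apply (G_derive u Hu).
      * eexists; apply K_derive.
    + replace (Derive (fun t => gap_series N t) u) with (log_series N (c * u ^ n))
        by (symmetry; apply is_derive_unique, gap_series_derive).
      replace (Derive (fun t => G t) u) with (g u + - ln (1 - c * u ^ n) / (b * INR n))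
        by (symmetry; apply is_derive_unique, (G_derive u Hu)).
      replace (Derive (fun t => K t) u) with (g u)
        by (symmetry; apply is_derive_unique, K_derive).
      field. lra.
  - intros u Hu. pose proof (cu_bounds u Hu) as Hx.
    pose proof (neg_ln_taylor N (c * u ^ n) ltac:(lra)) as Htaylor.
    assert (Hrem : (c * u ^ n) ^ S (S N) / (INR (S (S N)) * (1 - c * u ^ n)) <= tail).
    { unfold tail, Rdiv.
      assert (1 <= INR (S (S N))) by (apply (le_INR 1); lia).
      apply Rmult_le_compat; [apply pow_le; lra | apply Rlt_le, Rinv_0_lt_compat; nra
                             | apply pow_incr; lra |].
      apply Rinv_le_contravar; nra. }
    apply Rdiv_le_0_compat; nra.
Qed.

Lemma gap_series_lam (N : nat) :
  gap_series N lam = lam * sum_f_R0 (fun k => r ^ S k / (INR (S k) * INR (S (S k * n)))) N.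
Proof.
  unfold gap_series. rewrite scal_sum. apply sum_eq. intros k _.
  assert (INR (S k) <> 0) by (apply not_0_INR; lia).
  assert (INR (S (S k * n)) <> 0) by (apply not_0_INR; lia).
  unfold r. rewrite Rpow_mult_distr, <- pow_mult, (Nat.mul_comm n).
  change (lam ^ S (S k * n)) with (lam * lam ^ (S k * n)). field. auto.
Qed.

(* Its coefficients are at most r / (n k^2), whence the pi^2/6 bound. *)
Lemma gap_sum_le_basel (N : nat) :
  sum_f_R0 (fun k => r ^ S k / (INR (S k) * INR (S (S k * n)))) N <= r / INR n * (PI ^ 2 / 6).
Proof.
  pose proof r_bounds.
  assert (HnR : 0 < INR n) by (apply lt_0_INR; exact Hn).
  assert (Hr : 0 <= r / INR n) by (apply Rdiv_le_0_compat; lra).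
  eapply Rle_trans; [|apply Rmult_le_compat_l; [exact Hr | apply (basel_le N)]].
  rewrite scal_sum. apply sum_Rle. intros k _.
  assert (Hk : 1 <= INR (S k)) by (apply (le_INR 1); lia).
  assert (Hden : INR n * INR (S k) ^ 2 <= INR (S k) * INR (S (S k * n))).
  { rewrite (S_INR (S k * n)), mult_INR. nra. }
  assert (0 < INR (S (S k * n))) by (apply lt_0_INR; lia).
  assert (Hpow : r ^ S k <= r).
  { rewrite <- (Rmult_1_r r) at 2. simpl pow.
    apply Rmult_le_compat_l; [lra|]. rewrite <- (pow1 k). apply pow_incr; lra. }
  replace (/ INR (S k) ^ 2 * (r / INR n)) with (r / (INR n * INR (S k) ^ 2)) by (field; lra).
  unfold Rdiv.
  apply Rmult_le_compat; [apply pow_le; lra | apply Rlt_le, Rinv_0_lt_compat; nra | exact Hpow|].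
  apply Rinv_le_contravar; [apply Rmult_lt_0_compat; [lra | apply pow_lt; lra] | exact Hden].
Qed.

(* Lower bound: letting the truncation order go to infinity,
   G(lam) - K(lam) <= lam r / (b n^2) * pi^2/6. *)
Lemma G_sub_K_le_basel : G lam - K lam <= lam * r / (b * INR n ^ 2) * (PI ^ 2 / 6).
Proof.
  pose proof b_pos. pose proof r_bounds.
  assert (HnR : 0 < INR n) by (apply lt_0_INR; exact Hn).
  apply Rle_plus_epsilon. intros eps Heps.
  set (scale := lam / ((1 - r) * (b * INR n))).
  assert (Hscale : 0 < scale)
    by (apply Rdiv_lt_0_compat; [lra | apply Rmult_lt_0_compat; nra]).
  destruct (pow_lt_1_zero r ltac:(rewrite Rabs_right; lra) (eps / scale))
    as [N HN]; [apply Rdiv_lt_0_compat; lra|].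
  specialize (HN (S (S N)) ltac:(lia)).
  rewrite Rabs_right in HN by (apply Rle_ge, pow_le; lra).
  pose proof (G_sub_K_le N) as Hgap. rewrite gap_series_lam in Hgap.
  pose proof (gap_sum_le_basel N) as Hbasel.
  assert (Htail : lam * (r ^ S (S N) / (1 - r)) / (b * INR n) <= eps).
  { replace (lam * (r ^ S (S N) / (1 - r)) / (b * INR n)) with (scale * r ^ S (S N))
      by (unfold scale; field; repeat split; lra).
    apply Rlt_le. apply Rmult_lt_reg_r with (/ scale); [apply Rinv_0_lt_compat; lra|].
    replace (scale * r ^ S (S N) * / scale) with (r ^ S (S N)) by (field; lra).
    exact HN. }
  assert (Hmain : lam * sum_f_R0 (fun k => r ^ S k / (INR (S k) * INR (S (S k * n)))) N
                    / (b * INR n) <= lam * r / (b * INR n ^ 2) * (PI ^ 2 / 6)).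
  { replace (lam * r / (b * INR n ^ 2) * (PI ^ 2 / 6))
      with (lam / (b * INR n) * (r / INR n * (PI ^ 2 / 6))) by (field; lra).
    unfold Rdiv at 1. rewrite Rmult_comm, <- Rmult_assoc, (Rmult_comm _ lam).
    apply Rmult_le_compat_l; [apply Rlt_le, Rdiv_lt_0_compat; nra | exact Hbasel]. }
  unfold Rdiv at 1 in Hgap. rewrite Rmult_plus_distr_r in Hgap.
  unfold Rdiv in Hmain, Htail. lra.
Qed.

Lemma Qtilde_eq_G : Qtilde (S n) p lam = G lam.
Proof.
  pose proof b_pos. pose proof r_bounds.
  unfold Qtilde, G. cbv zeta. fold b.
  rewrite S_INR. replace (INR n + 1 - 1) with (INR n) by ring.
  replace (b / (b - p * lam ^ S n)) with (/ (1 - c * lam ^ n)).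
  - rewrite ln_Rinv by (unfold r in *; lra). reflexivity.
  - unfold r, c in *. simpl pow. field. split; [|lra].
    replace (b - p * (lam * lam ^ n)) with (b * (1 - p * lam / b * lam ^ n)) by (field; lra).
    apply Rmult_integral_contrapositive. split; lra.
Qed.

(* The error term obtained above is at most the one in the statement
   (the statement's term is larger by the factor 1/p^2 >= 1). *)
Lemma remainder_le :
  lam * r / (b * INR n ^ 2) * (PI ^ 2 / 6)
  <= lam ^ (S n + 1) / (p * (INR (S n) - 1) ^ 2 * (1 - (1 - p) * lam) ^ 2) * (PI ^ 2 / 6).
Proof.
  pose proof b_pos. pose proof PI_RGT_0.
  assert (HnR : 0 < INR n) by (apply lt_0_INR; exact Hn).
  apply Rmult_le_compat_r; [nra|].
  fold b. rewrite S_INR. replace (INR n + 1 - 1) with (INR n) by ring.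
  replace (lam ^ (S n + 1)) with (lam ^ 2 * lam ^ n)
    by (rewrite Nat.add_1_r, <- pow_add; f_equal; lia).
  assert (Hpos : 0 < lam ^ 2 * lam ^ n / (b ^ 2 * INR n ^ 2)).
  { apply Rdiv_lt_0_compat; apply Rmult_lt_0_compat; apply pow_lt; lra. }
  replace (lam * r / (b * INR n ^ 2)) with (p * (lam ^ 2 * lam ^ n / (b ^ 2 * INR n ^ 2)))
    by (unfold r, c; field; lra).
  replace (lam ^ 2 * lam ^ n / (p * INR n ^ 2 * b ^ 2))
    with (/ p * (lam ^ 2 * lam ^ n / (b ^ 2 * INR n ^ 2))) by (field; lra).
  apply Rmult_le_compat_r; [lra|].
  apply Rle_trans with 1; [lra|]. rewrite <- Rinv_1. apply Rinv_le_contravar; lra.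
Qed.

Variable F : R -> R.
Hypothesis HF0 : F 0 = lam.
Hypothesis HF : forall w, 0 <= w ->
  is_derive F w (lam * (p * F w ^ S n + (1 - p) * F w) - F w).

Lemma F_derive (w : R) : 0 <= w -> is_derive F w (F w * (b * c * F w ^ n - b)).
Proof.
  intros Hw. pose proof b_pos.
  replace (F w * (b * c * F w ^ n - b)) with (lam * (p * F w ^ S n + (1 - p) * F w) - F w).
  - exact (HF w Hw).
  - unfold c, b. simpl pow. field. unfold b in *. lra.
Qed.

(* F is positive: it solves the linear equation y' = (b c F^n - b) y, whose
   coefficient is made continuous on the whole line by evaluating F at |w|. *)
Lemma F_pos (w : R) : 0 <= w -> 0 < F w.
Proof.
  apply (pos_of_linear_ode F (fun v => b * c * F (Rabs v) ^ n - b)).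
  - intros v.
    assert (HFc : continuous F (Rabs v))
      by exact (ex_derive_continuous F _ (ex_intro _ _ (F_derive _ (Rabs_pos v)))).
    assert (Hpoly : ex_derive (fun y => b * c * y ^ n - b) (F (Rabs v)))
      by (auto_derive; exact I).
    exact (continuous_comp (fun v => F (Rabs v)) (fun y => b * c * y ^ n - b) v
             (continuous_comp Rabs F v (continuous_Rabs v) HFc)
             (ex_derive_continuous _ _ Hpoly)).
  - rewrite HF0. lra.
  - intros v Hv. rewrite Rabs_right by lra. rewrite Rmult_comm. apply F_derive, Hv.
Qed.

Lemma F_formula (w : R) : 0 <= w ->
  F w ^ n * (c + (/ lam ^ n - c) * exp (INR n * b * w)) = 1.
Proof.
  intros Hw. pose proof b_pos.
  set (k := INR n * b).
  assert (Hconst : (/ F 0 ^ n - c) * exp (- (k * 0)) = (/ F w ^ n - c) * exp (- (k * w))).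
  { apply (eq_of_derive_zero (fun v => (/ F v ^ n - c) * exp (- (k * v)))); [exact Hw|].
    intros v Hv. pose proof (F_pos v ltac:(lra)) as HFv.
    assert (Hpred : F v ^ n = F v * F v ^ pred n) by (destruct n; [lia | reflexivity]).
    assert (F v ^ pred n <> 0) by (apply pow_nonzero; lra).
    auto_derive.
    - split; [eexists; apply F_derive; lra|]. rewrite Hpred. split; [|exact I].
      apply Rmult_integral_contrapositive; split; lra.
    - replace (Derive (fun t => F t) v) with (F v * (b * c * F v ^ n - b))
        by (symmetry; apply is_derive_unique, F_derive; lra).
      unfold k. rewrite Hpred. field. split; lra. }
  rewrite HF0, Rmult_0_r, Ropp_0, exp_0, Rmult_1_r in Hconst.
  assert (Hexp : exp (- (k * w)) * exp (k * w) = 1)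
    by (rewrite <- exp_plus, Rplus_opp_l; apply exp_0).
  assert (Hinv : / F w ^ n = c + (/ lam ^ n - c) * exp (k * w)).
  { apply (Rplus_eq_reg_r (- c)).
    replace (/ F w ^ n + - c) with ((/ F w ^ n - c) * exp (- (k * w)) * exp (k * w))
      by (rewrite Rmult_assoc, Hexp; ring).
    rewrite <- Hconst. ring. }
  rewrite <- Hinv. field. apply pow_nonzero.
  pose proof (F_pos w Hw). lra.
Qed.

(* The coefficient of the exponential in F_formula is positive,
   as c lam^n = r < 1. *)
Lemma inv_lam_pow_sub_c_pos : 0 < / lam ^ n - c.
Proof.
  pose proof r_bounds. unfold r in *.
  assert (Hln : 0 < lam ^ n) by (apply pow_lt; lra).
  apply Rmult_lt_reg_r with (lam ^ n); [exact Hln|].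
  rewrite Rmult_minus_distr_r, Rinv_l by lra. lra.
Qed.

(* F stays below its initial value lam, since exp (n b w) >= 1. *)
Lemma F_le_lam (w : R) : 0 <= w -> F w <= lam.
Proof.
  intros Hw. pose proof b_pos. pose proof (F_pos w Hw). pose proof inv_lam_pow_sub_c_pos.
  pose proof c_nonneg.
  assert (Hln : 0 < lam ^ n) by (apply pow_lt; lra).
  assert (HFn : 0 < F w ^ n) by (apply pow_lt; lra).
  assert (Hexp : 1 <= exp (INR n * b * w)).
  { pose proof (exp_ineq1_le (INR n * b * w)). pose proof (pos_INR n).
    assert (0 <= INR n * b * w) by (apply Rmult_le_pos; [apply Rmult_le_pos|]; lra). lra. }
  assert (Hlam_n : lam ^ n * (c + (/ lam ^ n - c)) = 1) by (field; lra).
  pose proof (F_formula w Hw) as Hform.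
  apply (pow_le_cancel _ _ n Hn); [lra | lra|].
  set (X := c + (/ lam ^ n - c) * exp (INR n * b * w)) in Hform.
  assert (HX : c + (/ lam ^ n - c) <= X) by (unfold X; nra).
  nra.
Qed.

(* F tends to 0 at infinity: F^n <= 1 / ((lam^-n - c) exp (n b w)). *)
Lemma F_vanishes : filterlim F (Rbar_locally p_infty) (locally 0).
Proof.
  pose proof b_pos. pose proof inv_lam_pow_sub_c_pos.
  pose proof c_nonneg.
  assert (HnR : 0 < INR n) by (apply lt_0_INR; exact Hn).
  set (B := / lam ^ n - c) in *. set (k := INR n * b).
  assert (Hk : 0 < k) by (unfold k; apply Rmult_lt_0_compat; lra).
  intros P [eps HP]. pose proof (cond_pos eps) as Heps.
  assert (Hepsn : 0 < eps ^ n) by (apply pow_lt; lra).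
  set (W := / (B * k * eps ^ n)).
  assert (HW : 0 < W)
    by (apply Rinv_0_lt_compat, Rmult_lt_0_compat; [apply Rmult_lt_0_compat|]; lra).
  exists W. intros w Hw. apply HP.
  pose proof (F_pos w ltac:(lra)) as HFw. pose proof (F_formula w ltac:(lra)) as Hform.
  change (Rabs (F w - 0) < eps). rewrite Rminus_0_r, Rabs_right by lra.
  destruct (Rlt_le_dec (F w) eps) as [|Hge]; [assumption|exfalso].
  assert (Hpow : eps ^ n <= F w ^ n) by (apply pow_incr; lra).
  pose proof (exp_ineq1_le (k * w)).
  assert (HBkW : B * k * eps ^ n * W = 1) by (unfold W; field; repeat split; lra).
  assert (Hgrow : B * k * w <= c + B * exp (k * w)) by nra.
  assert (eps ^ n * (B * k * w) <= F w ^ n * (c + B * exp (k * w))).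
  { apply Rmult_le_compat; [lra | | exact Hpow | exact Hgrow].
    apply Rmult_le_pos; [apply Rmult_le_pos|]; lra. }
  assert (eps ^ n * (B * k * W) < eps ^ n * (B * k * w)).
  { apply Rmult_lt_compat_l; [lra|].
    apply Rmult_lt_compat_l; [apply Rmult_lt_0_compat|]; lra. }
  fold B in Hform. unfold k in *. lra.
Qed.

Lemma K_F_derive (w : R) : 0 <= w -> is_derive (fun t => - K (F t)) w (F w).
Proof.
  intros Hw. pose proof b_pos. pose proof r_bounds.
  pose proof (F_pos w Hw). pose proof (F_le_lam w Hw).
  pose proof (cu_bounds (F w) ltac:(lra)).
  assert (Hval : - (F w * (b * c * F w ^ n - b) * g (F w)) = F w).
  { rewrite g_on_interval by lra. field. split; lra. }
  rewrite <- Hval.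
  apply (is_derive_opp (fun t => K (F t))).
  apply (is_derive_comp K F); [apply K_derive | apply F_derive, Hw].
Qed.

Lemma integral_F (y : R) : 0 <= y -> is_RInt F 0 y (K lam - K (F y)).
Proof.
  intros Hy.
  replace (K lam - K (F y)) with (minus (- K (F y)) (- K (F 0)))
    by (rewrite HF0; unfold minus, plus, opp; simpl; ring).
  apply (is_RInt_derive (V := R_CompleteNormedModule) (fun t => - K (F t)) F);
    rewrite Rmin_left, Rmax_right by lra.
  - intros x Hx. apply K_F_derive. lra.
  - intros x Hx.
    exact (ex_derive_continuous F x (ex_intro _ _ (F_derive x ltac:(lra)))).
Qed.

(* Hence Q = int_0^oo F = K(lam), as F(y) -> 0 and K(0) = 0. *)
Lemma improper_integral_F : is_RInt_gen F (at_point 0) (Rbar_locally p_infty) (K lam).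
Proof.
  assert (HKc : filterlim (fun z => K lam - K z) (locally 0) (locally (K lam))).
  { assert (Hd : ex_derive (fun z => K lam - K z) 0)
      by (eexists; apply (is_derive_minus (fun _ => K lam) K);
          [apply is_derive_const | apply K_derive]).
    pose proof (ex_derive_continuous _ _ Hd) as Hc.
    unfold continuous in Hc. rewrite K_0, Rminus_0_r in Hc. exact Hc. }
  pose proof (filterlim_comp _ _ _ F (fun z => K lam - K z) _ _ _ F_vanishes HKc) as Hlim.
  intros P HP.
  apply (Filter_prod _ _ _ (fun a => a = 0) (fun y => 0 < y /\ P (K lam - K (F y)))).
  - reflexivity.
  - apply filter_and; [exists 0; auto | apply Hlim, HP].
  - intros a y -> [Hy HPy]. exists (K lam - K (F y)).
    split; [apply integral_F; lra | exact HPy].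
Qed.

End Quadrature.

End Prop48.

Theorem proposition4p8 (d : nat) (p lam : R) (F : R -> R) :
  (2 <= d)%nat ->
  0 < p <= 1 ->
  0 < lam < 1 ->
  F 0 = lam ->
  (forall w, 0 <= w ->
     is_derive F w (lam * (p * F w ^ d + (1 - p) * F w) - F w)) ->
  exists Q : R,
    is_RInt_gen F (at_point 0) (Rbar_locally p_infty) Q /\
    Qtilde d p lam
      - lam ^ (d + 1) / (p * (INR d - 1) ^ 2 * (1 - (1 - p) * lam) ^ 2) * (PI ^ 2 / 6)
      <= Q /\
    Q <= Qtilde d p lam.
Proof.
  intros Hd Hp Hlam HF0 HF.
  destruct d as [|n]; [lia|].
  assert (Hn : (0 < n)%nat) by lia.
  exists (Prop48.K n p lam lam).
  rewrite (Prop48.Qtilde_eq_G n p lam Hp Hlam).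
  pose proof (Prop48.K_le_G n p lam Hn Hp Hlam) as Hupper.
  pose proof (Prop48.G_sub_K_le_basel n p lam Hn Hp Hlam) as Hgap.
  pose proof (Prop48.remainder_le n p lam Hn Hp Hlam) as Herror.
  split; [exact (Prop48.improper_integral_F n p lam Hn Hp Hlam F HF0 HF) | lra].
Qed.
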